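(* Let $A=[a_{ij}]\in\mathfrak{B}_{n\times m}$ be a semi-canonical matrix. Then there exist integers $i,j$ with $0\le i\le n$ and $0\le j\le m$ such that $a_{11}=a_{12}=\cdots=a_{1j}=0$ and $a_{1,j+1}=a_{1,j+2}=\cdots=a_{1m}=1$, and $a_{11}=a_{21}=\cdots=a_{i1}=0$ and $a_{i+1,1}=a_{i+2,1}=\cdots=a_{n1}=1$.
   Context: $\mathfrak{B}_{n\times m}$ denotes the set of all $n\times m$ matrices with entries in $\{0,1\}$. For $A=[a_{ij}]\in\mathfrak{B}_{n\times m}$, $r(A)=\langle x_1,\dots,x_n\rangle$ with $x_i=\sum_{j=1}^m a_{ij}2^{m-j}$ and $c(A)=\langle y_1,\dots,y_m\rangle$ with $y_j=\sum_{i=1}^n a_{ij}2^{n-i}$. $A$ is semi-canonical if $x_1\le x_2\le\cdots\le x_n$ and $y_1\le y_2\le\cdots\le y_m$. *)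

From mathcomp Require Import all_boot all_algebra.
Set Implicit Arguments. Unset Strict Implicit. Unset Printing Implicit Defensive.

(* A binary n x m matrix: entries in {0,1} represented as bool (true = 1).
   Indices are 0-based: row i : 'I_n is row i+1 of the paper. *)

(* x_i = sum_j a_ij 2^(m-j)  (paper, 1-based)  = sum_{j<m} a_ij 2^(m-1-j) (0-based) *)
Definition rowval n m (A : 'M[bool]_(n, m)) (i : 'I_n) : nat :=
  \sum_(j < m) (A i j : nat) * 2 ^ (m - 1 - j).

(* y_j = sum_i a_ij 2^(n-i) (1-based) *)
Definition colval n m (A : 'M[bool]_(n, m)) (j : 'I_m) : nat :=
  \sum_(i < n) (A i j : nat) * 2 ^ (n - 1 - i).

Definition semi_canonical n m (A : 'M[bool]_(n, m)) : Prop :=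
  (forall i1 i2 : 'I_n, i1 <= i2 -> rowval A i1 <= rowval A i2) /\
  (forall j1 j2 : 'I_m, j1 <= j2 -> colval A j1 <= colval A j2).

From mathcomp Require Import all_boot all_algebra.
From mathcomp Require Import zify.

Set Implicit Arguments.
Unset Strict Implicit.
Unset Printing Implicit Defensive.

(* The leading bit of a binary number [x] with [m + 1] digits is [2 ^ m <= x].
   Hence increasing row values make the first column a monotone bit sequence,
   which must switch from 0 to 1 exactly once; symmetrically, increasing
   column values do the same for the first row. *)

Lemma sum_pow2_lt k : \sum_(i < k) 2 ^ (k - 1 - i) < 2 ^ k.
Proof.
elim: k => [|k IHk]; first by rewrite big_ord0.
rewrite big_ord_recl subn0 subSS subn0.
have -> : \sum_(i < k) 2 ^ (k - bump 0 i) = \sum_(i < k) 2 ^ (k - 1 - i).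
  by apply: eq_bigr => i _; congr (2 ^ _); rewrite /bump /=; lia.
by rewrite expnS mul2n -addnn ltn_add2l.
Qed.

Lemma binary_sum_lt k (b : 'I_k -> bool) :
  \sum_(i < k) (b i : nat) * 2 ^ (k - 1 - i) < 2 ^ k.
Proof.
apply: leq_ltn_trans (sum_pow2_lt k); apply: leq_sum => i _.
by rewrite -[leqRHS]mul1n leq_mul2r leq_b1 orbT.
Qed.

Lemma binary_lead_bit m (b : 'I_m.+1 -> bool) :
  b ord0 = (2 ^ m <= \sum_(i < m.+1) (b i : nat) * 2 ^ (m.+1 - 1 - i)).
Proof.
rewrite big_ord_recl subn0 subSS subn0.
have -> : \sum_(i < m) (b (lift ord0 i) : nat) * 2 ^ (m - bump 0 i)
        = \sum_(i < m) (b (lift ord0 i) : nat) * 2 ^ (m - 1 - i).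
  by apply: eq_bigr => i _; congr (_ * 2 ^ _); rewrite /bump /=; lia.
have tail_lt := binary_sum_lt (fun i => b (lift ord0 i)).
by case: (b ord0); rewrite ?mul1n ?leq_addr // mul0n add0n leqNgt tail_lt.
Qed.

Lemma rowval_lead_bit n m (A : 'M[bool]_(n, m.+1)) i :
  A i ord0 = (2 ^ m <= rowval A i).
Proof. exact: binary_lead_bit. Qed.

Lemma colval_lead_bit n m (A : 'M[bool]_(n.+1, m)) j :
  A ord0 j = (2 ^ n <= colval A j).
Proof. exact: (binary_lead_bit (fun i => A i j)). Qed.

Lemma threshold_of_monotone m (g : 'I_m -> bool) :
  (forall k1 k2 : 'I_m, k1 <= k2 -> g k1 -> g k2) ->
  exists j, j <= m /\ forall k : 'I_m, g k = (j <= k).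
Proof.
move=> g_mono; case: (pickP g) => [k0 gk0 | g_false]; last first.
  by exists m; split=> // k; rewrite g_false leqNgt ltn_ord.
have [j gj j_min] := arg_minnP (@nat_of_ord m) gk0.
exists j; split=> [|k]; first exact: ltnW.
by apply/idP/idP=> [/j_min // | /g_mono]; apply.
Qed.

Lemma threshold_of_lead_bits n p (v : 'I_n -> nat) (b : 'I_n -> bool) :
  (forall k, b k = (p <= v k)) ->
  (forall k1 k2 : 'I_n, k1 <= k2 -> v k1 <= v k2) ->
  exists i, i <= n /\ forall k : 'I_n, b k = (i <= k).
Proof.
move=> bE v_mono; apply: threshold_of_monotone => k1 k2 k12.
by rewrite !bE => /leq_trans; apply; apply: v_mono.
Qed.

Theorem proposition3 (n m : nat) (A : 'M[bool]_(n, m)) :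
  semi_canonical A ->
  exists i j : nat,
    i <= n /\ j <= m /\
    (* first row: a_{1,k+1} = 0 for k < j and = 1 for k >= j (0-based k) *)
    (forall (r : 'I_n) (k : 'I_m), val r = 0 -> A r k = (j <= k)) /\
    (* first column: a_{k+1,1} = 0 for k < i and = 1 for k >= i *)
    (forall (k : 'I_n) (c : 'I_m), val c = 0 -> A k c = (i <= k)).
Proof.
move=> [rows_mono cols_mono].
have [j [le_jm first_row]] : exists j, j <= m /\
    forall (r : 'I_n) (k : 'I_m), val r = 0 -> A r k = (j <= k).
  case: n A rows_mono cols_mono => [|n] A _ cols_mono.
    by exists 0; split=> // [[]].
  have [j [le_jm row0]] := threshold_of_lead_bits (colval_lead_bit A) cols_mono.
  by exists j; split=> // r k r0; rewrite (_ : r = ord0) //; apply: val_inj.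
have [i [le_in first_col]] : exists i, i <= n /\
    forall (k : 'I_n) (c : 'I_m), val c = 0 -> A k c = (i <= k).
  case: m A rows_mono {first_row le_jm cols_mono} => [|m] A rows_mono.
    by exists 0; split=> // ? [].
  have [i [le_in col0]] := threshold_of_lead_bits (rowval_lead_bit A) rows_mono.
  by exists i; split=> // k c c0; rewrite (_ : c = ord0) //; apply: val_inj.
by exists i, j.
Qed.
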